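(* Let $d \ge 2$. As $\{r^{(1)}, r^{(2)}\}$ ranges over all pairs of incomparable points of $(0,1)^d$ whose $2d$ coordinates are all distinct, the set of possible values of the number $\gamma$ of generators of their record-setting region is exactly $\{ d + a(d-a) : 1 \le a \le \lfloor d/2 \rfloor\}$.
   Context: For $x,y \in \mathbb{R}^d$, $x \prec y$ means $x_j < y_j$ for all $j$, and $x \le y$ means $x_j \le y_j$ for all $j$; points are incomparable if neither is $\le$ the other. The record-setting region of points $r^{(1)},\dots,r^{(\rho)}$ is $S := \{x \in [0,1)^d : x \not\prec r^{(i)} \text{ for all } i \in [\rho]\}$, and its generators are the minimal elements of $S$ with respect to $\le$. *)

From mathcomp Require Import all_boot.
From Stdlib Require Import Reals List.
Set Implicit Arguments. Unset Strict Implicit. Unset Printing Implicit Defensive.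

Definition pt (d : nat) := 'I_d -> R.

Definition ltv {d} (x y : pt d) : Prop := forall j : 'I_d, (x j < y j)%R.
Definition lev {d} (x y : pt d) : Prop := forall j : 'I_d, (x j <= y j)%R.
Definition incomparable {d} (x y : pt d) : Prop := ~ lev x y /\ ~ lev y x.

Definition in_unit_cube_co {d} (x : pt d) : Prop :=
  forall j : 'I_d, (0 <= x j)%R /\ (x j < 1)%R.
Definition in_unit_cube_oo {d} (x : pt d) : Prop :=
  forall j : 'I_d, (0 < x j)%R /\ (x j < 1)%R.

Definition in_record_region {d} (rs : list (pt d)) (x : pt d) : Prop :=
  in_unit_cube_co x /\ forall r, In r rs -> ~ ltv x r.

Definition generator {d} (rs : list (pt d)) (x : pt d) : Prop :=
  in_record_region rs x /\
  forall y, in_record_region rs y -> lev y x -> y = x.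

Definition num_generators {d} (rs : list (pt d)) (n : nat) : Prop :=
  exists l : list (pt d), NoDup l /\ length l = n /\
    forall x, In x l <-> generator rs x.

Definition coords_distinct2 {d} (r1 r2 : pt d) : Prop :=
  (forall i j : 'I_d, i <> j -> r1 i <> r1 j) /\
  (forall i j : 'I_d, i <> j -> r2 i <> r2 j) /\
  (forall i j : 'I_d, r1 i <> r2 j).

From mathcomp Require Import all_boot.
From Stdlib Require Import Reals List.
From mathcomp Require Import zify.
From Stdlib Require Import Classical Permutation FunctionalExtensionality Lra.

(* A point x of [0,1)^d lies in the record-setting region of r1, r2 iff
   r1 k <= x k and r2 k' <= x k' for some k, k'; the least such point is the
   corner with coordinate r1 k at k, r2 k' at k' (their maximum if k = k') and
   0 elsewhere.  Hence every generator is a corner, and a corner is minimal iff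
   k = k', or r1 k < r2 k and r2 k' < r1 k'.  With a = #{i | r1 i < r2 i} this
   gives d + a (d - a) generators; incomparability means 0 < a < d, and a and
   d - a give the same count.  Conversely, interleaving 2d distinct values in
   (0,1) realises every a. *)

Set Implicit Arguments.
Unset Strict Implicit.
Unset Printing Implicit Defensive.

Definition Rltb (x y : R) : bool := if Rlt_dec x y then true else false.

Lemma RltbP x y : reflect (x < y)%R (Rltb x y).
Proof. by rewrite /Rltb; case: Rlt_dec => h; constructor. Qed.

Lemma In_mem (T : eqType) (x : T) (s : list T) : In x s <-> x \in s.
Proof.
elim: s => //= y s IH; rewrite seq.in_cons.
split=> [[->|/IH ->] | /orP [/eqP ->|/IH]]; rewrite ?eqxx ?orbT; auto.
Qed.

Lemma uniq_NoDup (T : eqType) (s : list T) : uniq s -> NoDup s.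
Proof.
elim: s => [|x s IH] /=; first by constructor.
by case/andP => /negP x_notin /IH; constructor => // /In_mem.
Qed.

Lemma length_size (T : Type) (s : list T) : length s = size s.
Proof. by elim: s => //= _ s ->. Qed.

Lemma lev_antisym d (x y : pt d) : lev x y -> lev y x -> x = y.
Proof. by move=> le_xy le_yx; apply: functional_extensionality => j; apply: Rle_antisym. Qed.

Lemma not_ltvE d (x r : pt d) : ~ ltv x r <-> exists k, (r k <= x k)%R.
Proof.
split=> [not_lt | [k le_k] lt]; last by have := lt k; lra.
apply: NNPP => no_k; apply: not_lt => k.
by apply: Rnot_le_lt => le_k; apply: no_k; exists k.
Qed.

Lemma num_generators_image d (rs : list (pt d)) (T : finType) (P : {set T})
    (f : T -> pt d) :
  {in P &, injective f} ->
  (forall x, generator rs x <-> exists2 t, t \in P & x = f t) ->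
  forall n, num_generators rs n <-> n = #|P|.
Proof.
move=> f_inj genE n; set gens := map f (enum P).
have gensE x : In x gens <-> generator rs x.
  rewrite genE in_map_iff; split=> [[t [<- /In_mem]] | [t Pt ->]].
    by rewrite mem_enum; exists t.
  by exists t; rewrite In_mem mem_enum.
have gens_NoDup : NoDup gens.
  apply: NoDup_map_NoDup_ForallPairs; last exact/uniq_NoDup/enum_uniq.
  by move=> s t /In_mem; rewrite mem_enum => Ps /In_mem; rewrite mem_enum => Pt; apply: f_inj.
have size_gens : length gens = #|P| by rewrite length_map length_size cardE.
split=> [[l [l_NoDup [<- lE]]] | ->]; last by exists gens.
rewrite -size_gens; apply/Permutation_length/NoDup_Permutation => // x.
by rewrite lE gensE.
Qed.

Lemma mem_diag (T : finType) (i j : T) : ((i, j) \in [set (k, k) | k : T]) = (i == j).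
Proof. by apply/imsetP/eqP => [[k _ [-> ->]] // | ->]; exists j. Qed.

Section TwoRecords.

Variables (d : nat) (r1 r2 : pt d).
Hypotheses (r1_in : in_unit_cube_oo r1) (r2_in : in_unit_cube_oo r2)
  (r12_neq : forall i, r1 i <> r2 i).

Local Notation rs := (r1 :: r2 :: nil).

Lemma in_region2E x :
  in_record_region rs x <->
  in_unit_cube_co x /\ (exists k, (r1 k <= x k)%R) /\ (exists k, (r2 k <= x k)%R).
Proof.
rewrite /in_record_region -!not_ltvE; split=> [[x_in x_nlt] | [x_in [nlt1 nlt2]]].
  by split=> //; split; apply: x_nlt; rewrite /=; auto.
by split=> // r /= [<- | [<- | []]].
Qed.

Definition below : {set 'I_d} := [set i | Rltb (r1 i) (r2 i)].

Lemma in_below i : reflect (r1 i < r2 i)%R (i \in below).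
Proof. by rewrite inE; apply: RltbP. Qed.

Lemma notin_below i : i \notin below -> (r2 i < r1 i)%R.
Proof.
move/in_below=> not_lt; have := @r12_neq i.
by case: (Rtotal_order (r1 i) (r2 i)) => [|[|]].
Qed.

Definition corner (k k' : 'I_d) : pt d :=
  fun m => Rmax (if m == k then r1 k else 0%R) (if m == k' then r2 k' else 0%R).

Definition admissible : {set 'I_d * 'I_d} :=
  [set (i, i) | i : 'I_d] :|: setX below (~: below).

Lemma in_admissible k k' :
  ((k, k') \in admissible) = (k == k') || (k \in below) && (k' \notin below).
Proof. by rewrite !inE mem_diag. Qed.

Lemma corner_le x k k' :
  in_unit_cube_co x -> (r1 k <= x k)%R -> (r2 k' <= x k')%R -> lev (corner k k') x.
Proof.
move=> x_in le_k le_k' m; have [x_ge0 _] := x_in m.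
by apply: Rmax_lub; case: eqP => [->|].
Qed.

Lemma corner_in_region k k' : in_record_region rs (corner k k').
Proof.
apply/in_region2E; split; last by split; [exists k | exists k'];
  rewrite /corner eqxx; [apply: Rmax_l | apply: Rmax_r].
move=> m; have [r1_gt0 r1_lt1] := r1_in k; have [r2_gt0 r2_lt1] := r2_in k'.
split; first by apply: (Rle_trans _ _ _ _ (Rmax_l _ _)); case: eqP; lra.
by apply: Rmax_lub_lt; case: eqP; lra.
Qed.

Lemma corner_r1E k k' m :
  (k, k') \in admissible -> (r1 m <= corner k k' m)%R <-> m = k.
Proof.
move=> adm; split=> [le_m | ->]; last by rewrite /corner eqxx; apply: Rmax_l.
case: (eqVneq m k) => // neq_mk; exfalso; move: le_m.
have [r1_gt0 _] := r1_in m; rewrite /corner (negbTE neq_mk).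
case: (eqVneq m k') => [eq_mk' | _]; last by rewrite Rmax_left; lra.
move: adm; rewrite in_admissible -eq_mk' eq_sym (negbTE neq_mk) => /andP [_].
move/notin_below => lt_m; have [r2_gt0 _] := r2_in m.
by rewrite Rmax_right; lra.
Qed.

Lemma corner_r2E k k' m :
  (k, k') \in admissible -> (r2 m <= corner k k' m)%R <-> m = k'.
Proof.
move=> adm; split=> [le_m | ->]; last by rewrite /corner eqxx; apply: Rmax_r.
case: (eqVneq m k') => // neq_mk'; exfalso; move: le_m.
have [r2_gt0 _] := r2_in m; rewrite /corner (negbTE neq_mk').
case: (eqVneq m k) => [eq_mk | _]; last by rewrite Rmax_left; lra.
move: adm; rewrite in_admissible -eq_mk (negbTE neq_mk') => /andP [/in_below lt_m _].
have [r1_gt0 _] := r1_in m.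
by rewrite Rmax_left; lra.
Qed.

Lemma diag_admissible k : (k, k) \in admissible.
Proof. by rewrite in_admissible eqxx. Qed.

Lemma generator_corner x :
  generator rs x <-> exists2 p, p \in admissible & x = corner p.1 p.2.
Proof.
split=> [[x_reg x_min] | [[k k'] adm ->]].
  have [x_in [[k le_k] [k' le_k']]] := proj1 (in_region2E x) x_reg.
  have corner_min m m' : (r1 m <= x m)%R -> (r2 m' <= x m')%R -> corner m m' = x.
    by move=> le_m le_m'; apply: x_min; [apply: corner_in_region | apply: corner_le].
  exists (k, k'); last by rewrite corner_min.
  rewrite in_admissible; case: (eqVneq k k') => //= neq_kk'; apply/andP; split.
    apply/negPn/negP => /notin_below lt_k.
    have eq_x := corner_min k k le_k (ltac:(lra)).
    have := proj1 (corner_r2E k' (diag_admissible k)); rewrite eq_x => /(_ le_k') eq_k'k.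
    by rewrite eq_k'k eqxx in neq_kk'.
  apply/negP => /in_below lt_k'.
  have eq_x := corner_min k' k' (ltac:(lra)) le_k'.
  have := proj1 (corner_r1E k (diag_admissible k')); rewrite eq_x => /(_ le_k) eq_kk'.
  by rewrite eq_kk' eqxx in neq_kk'.
split=> [|y y_reg le_y]; first exact: corner_in_region.
have [y_in [[m le_m] [m' le_m']]] := proj1 (in_region2E y) y_reg.
have eq_m : m = k by apply/(corner_r1E m adm)/(Rle_trans _ _ _ le_m).
have eq_m' : m' = k' by apply/(corner_r2E m' adm)/(Rle_trans _ _ _ le_m').
by apply: lev_antisym => //; apply: corner_le; rewrite -?eq_m -?eq_m'.
Qed.

Lemma corner_inj : {in admissible &, injective (fun p => corner p.1 p.2)}.
Proof.
move=> [k k'] [m m'] adm_k adm_m /= eq_c.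
have eq_km : k = m.
  by apply/(corner_r1E k adm_m); rewrite -eq_c; apply/(corner_r1E k adm_k).
have eq_km' : k' = m'.
  by apply/(corner_r2E k' adm_m); rewrite -eq_c; apply/(corner_r2E k' adm_k).
by rewrite eq_km eq_km'.
Qed.

Lemma card_admissible : #|admissible| = (d + #|below| * (d - #|below|))%N.
Proof.
have disj : [set (i, i) | i : 'I_d] :&: setX below (~: below) = set0.
  apply/setP=> [[i j]]; rewrite !inE mem_diag.
  by case: eqP => //= ->; case: Rltb.
rewrite cardsU disj cards0 subn0 card_imset ?card_ord; last by move=> i j [].
by rewrite cardsX [#|~: below|]cardsCs setCK card_ord.
Qed.

Lemma num_generators_two n :
  num_generators rs n <-> n = (d + #|below| * (d - #|below|))%N.
Proof.
by rewrite -card_admissible; exact: num_generators_image corner_inj generator_corner n.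
Qed.

Lemma lev12E : lev r1 r2 <-> below = [set: 'I_d].
Proof.
split=> [le12 | below_T i].
  apply/setP=> i; rewrite in_setT; apply/in_below.
  by case: (Rle_lt_or_eq_dec _ _ (le12 i)) => // /r12_neq.
by apply: Rlt_le; apply/in_below; rewrite below_T inE.
Qed.

Lemma lev21E : lev r2 r1 <-> below = set0.
Proof.
split=> [le21 | below_0 i].
  by apply/setP=> i; rewrite in_set0; apply/negbTE/in_below => lt12; have := le21 i; lra.
by apply: Rlt_le; apply: notin_below; rewrite below_0 inE.
Qed.

Lemma incomparable_below : incomparable r1 r2 <-> (0 < #|below| < d)%N.
Proof.
have lt_d : (#|below| < d)%N = (below != setT).
  by rewrite -properT properEcard subsetT cardsT card_ord.
rewrite /incomparable lev12E lev21E card_gt0 lt_d.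
by split=> [[/eqP ? /eqP ?] | /andP [/eqP ? /eqP ?]]; first apply/andP.
Qed.

End TwoRecords.

Definition recip2 (n : nat) : R := / INR n.+2.

Lemma recip2_gt0 n : (0 < recip2 n)%R.
Proof. by apply/Rinv_0_lt_compat/lt_0_INR; lia. Qed.

Lemma recip2_lt1 n : (recip2 n < 1)%R.
Proof.
by rewrite /recip2 -Rinv_1; apply: Rinv_1_lt_contravar; [lra | apply: lt_1_INR; lia].
Qed.

Lemma recip2_lt m n : (m < n)%N -> (recip2 n < recip2 m)%R.
Proof.
by move=> lt_mn; apply: Rinv_1_lt_contravar; [apply/Rlt_le/lt_1_INR | apply: lt_INR]; lia.
Qed.

Lemma recip2_inj : injective recip2.
Proof. by move=> m n eq_c; case: (ltngtP m n) => // /recip2_lt; lra. Qed.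

Lemma double_addb_inj m n (b c : bool) : (2 * m + b = 2 * n + c)%N -> m = n /\ b = c.
Proof. by case: b; case: c => /= eq_mn; split=> //; lia. Qed.

(* [recip2] is decreasing, so [r1 i < r2 i] exactly when [i \in A]; the 2d
   indices [2 * i + b] are pairwise distinct. *)
Lemma realize_below_set d (A : {set 'I_d}) :
  exists r1 r2 : pt d, [/\ in_unit_cube_oo r1, in_unit_cube_oo r2,
    coords_distinct2 r1 r2 & below r1 r2 = A].
Proof.
exists (fun i : 'I_d => recip2 (2 * i + (i \in A))),
       (fun i : 'I_d => recip2 (2 * i + (i \notin A))).
split.
- by move=> i; split; [apply: recip2_gt0 | apply: recip2_lt1].
- by move=> i; split; [apply: recip2_gt0 | apply: recip2_lt1].
- split; [|split] => i j.
  + by move=> neq_ij /recip2_inj /double_addb_inj [/ord_inj /neq_ij].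
  + by move=> neq_ij /recip2_inj /double_addb_inj [/ord_inj /neq_ij].
  + by move=> /recip2_inj /double_addb_inj [/ord_inj ->]; case: (j \in A).
- apply/setP=> i; rewrite inE; case: (i \in A) => /=.
    by apply/RltbP/recip2_lt; lia.
  by apply/negbTE/RltbP/Rlt_asym/recip2_lt; lia.
Qed.

Lemma card_ord_lt n a : (a <= n)%N -> #|[set i : 'I_n | (i < a)%N]| = a.
Proof.
move=> le_an; have -> : [set i : 'I_n | (i < a)%N] = widen_ord le_an @: [set: 'I_a].
  apply/setP=> i; rewrite inE; apply/idP/imsetP => [lt_ia | [[j lt_ja] _ ->] //].
  by exists (Ordinal lt_ia) => //; apply: val_inj.
by rewrite card_imset ?cardsT ?card_ord // => i j [] /ord_inj.
Qed.

Lemma mul_subn_half d a : (0 < a < d)%N ->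
  exists2 b, (0 < b <= d./2)%N & (a * (d - a) = b * (d - b))%N.
Proof.
move=> /andP [a_gt0 lt_ad]; case: (leqP a d./2) => le_a.
  by exists a; first rewrite a_gt0.
by exists (d - a); [lia | rewrite subKn ?(ltnW lt_ad) // mulnC].
Qed.

Theorem mainTheorem5 (d : nat) (hd : (2 <= d)%N) (g : nat) :
  (exists r1 r2 : pt d,
      in_unit_cube_oo r1 /\ in_unit_cube_oo r2 /\
      incomparable r1 r2 /\ coords_distinct2 r1 r2 /\
      num_generators (r1 :: r2 :: nil) g)
  <->
  (exists a : nat, (1 <= a)%N /\ (a <= d./2)%N /\ g = (d + a * (d - a))%N).
Proof.
split=> [[r1 [r2 [r1_in [r2_in [r12_inc [[_ [_ r12_neq]] r12_gen]]]]]] |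
         [a [a_gt0 [le_a ->]]]].
  have r12_neq_diag i : r1 i <> r2 i := r12_neq i i.
  move/(num_generators_two r1_in r2_in r12_neq_diag): r12_gen => ->.
  move/(incomparable_below r12_neq_diag)/mul_subn_half: r12_inc => [b /andP [b_gt0 le_b] ->].
  by exists b.
have [r1 [r2 [r1_in r2_in r12_dist below_eq]]] := realize_below_set [set i : 'I_d | (i < a)%N].
have r12_neq i : r1 i <> r2 i by case: r12_dist => [_ [_]]; apply.
have card_below : #|below r1 r2| = a by rewrite below_eq card_ord_lt //; lia.
exists r1, r2; do 3 (split=> //); last split=> //.
  by apply/(incomparable_below r12_neq); rewrite card_below; lia.
by apply/(num_generators_two r1_in r2_in r12_neq); rewrite card_below.
Qed.
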